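(* Let $d\ge 1$, let $\mathcal{S}$ be a nonempty finite index set, and let $\hat u_m\in\{-1,1\}^d$ for each $m\in\mathcal{S}$. Then for every coordinate $i\in[d]$, the signs of the outputs in coordinate $i$ of the following aggregation rules all coincide: the mean rule $\mathrm{Agg}_{\mathrm{avg}}$, the coordinate-wise $k$-trimmed-mean rule $\mathrm{Agg}_{\mathrm{trimmed},k}$ for any integer $0\le k<|\mathcal{S}|/2$, the coordinate-wise median rule $\mathrm{Agg}_{\mathrm{median}}$, and the coordinate-wise majority vote rule $\mathrm{Agg}_{\mathrm{maj}}$.
   Context: Let $\hat u_{mi}$ denote the $i$-th coordinate of $\hat u_m$, and $\mathrm{sign}:\mathbb{R}\to\{-1,0,1\}$ the usual sign function (with $\mathrm{sign}(0)=0$). The rules are defined as follows. (A.1) Mean: $\mathrm{Agg}_{\mathrm{avg}}(\{\hat u_m\}_{m\in\mathcal{S}})=\frac{1}{|\mathcal{S}|}\sum_{m\in\mathcal{S}}\hat u_m$. (A.2) Coordinate-wise $k$-trimmed mean ($k\in\mathbb{N}$): for each coordinate $i$, sort $\{\hat u_{mi}: m\in\mathcal{S}\}$ in increasing order, remove the top $k$ and bottom $k$ values, and let $\mathcal{R}_i$ be the set of remaining clients; if $\mathcal{R}_i=\emptyset$ the output in coordinate $i$ is $1$ or $-1$ uniformly at random, otherwise it is $\frac{1}{|\mathcal{R}_i|}\sum_{m\in\mathcal{R}_i}\hat u_{mi}$. (A.3) Coordinate-wise median: for each coordinate $i$, sort $\{\hat u_{mi}: m\in\mathcal{S}\}$ increasingly;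 if $|\mathcal{S}|$ is even, output the average of the elements of ranks $|\mathcal{S}|/2$ and $|\mathcal{S}|/2+1$; otherwise output the element of rank $\lceil|\mathcal{S}|/2\rceil$. (A.4) Coordinate-wise majority vote: in coordinate $i$ output $1$ if there are more $1$'s than $-1$'s among $\{\hat u_{mi}:m\in\mathcal{S}\}$, output $-1$ if there are more $-1$'s than $1$'s, and output $0$ otherwise. *)

From HB Require Import structures.
From mathcomp Require Import all_boot all_order all_algebra.
Set Implicit Arguments. Unset Strict Implicit. Unset Printing Implicit Defensive.
Import Order.TTheory GRing.Theory Num.Theory.
Local Open Scope ring_scope.

(* Clients indexed by a finite type S; client m sends u m : 'I_d -> R. *)

Definition coord_vals (R : realFieldType) (S : finType) (d : nat)
  (u : S -> 'I_d -> R) (i : 'I_d) : seq R := [seq u m i | m <- enum S].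

Definition sorted_vals (R : realFieldType) (S : finType) (d : nat)
  (u : S -> 'I_d -> R) (i : 'I_d) : seq R := sort <=%R (coord_vals u i).

Definition agg_avg (R : realFieldType) (S : finType) (d : nat)
  (u : S -> 'I_d -> R) (i : 'I_d) : R :=
  (#|S|%:R)^-1 * \sum_(m : S) u m i.

(* (A.2) k-trimmed mean: drop the k smallest and k largest values and average
   the rest.  The empty case (random +-1) never occurs under 2k < |S|; it is
   set to 1 here. *)
Definition agg_trimmed (R : realFieldType) (S : finType) (d : nat) (k : nat)
  (u : S -> 'I_d -> R) (i : 'I_d) : R :=
  let r := take (#|S| - 2 * k) (drop k (sorted_vals u i)) in
  if size r == 0%N then 1 else (size r)%:R^-1 * \sum_(x <- r) x.

(* (A.3) median; ranks are 1-based, so rank j is index j.-1 *)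
Definition agg_median (R : realFieldType) (S : finType) (d : nat)
  (u : S -> 'I_d -> R) (i : 'I_d) : R :=
  let s := sorted_vals u i in
  let n := #|S| in
  if ~~ odd n then (nth 0 s (n %/ 2).-1 + nth 0 s (n %/ 2)) / 2
  else nth 0 s (uphalf n).-1.

Definition agg_maj (R : realFieldType) (S : finType) (d : nat)
  (u : S -> 'I_d -> R) (i : 'I_d) : R :=
  let p := #|[set m | u m i == 1]| in
  let q := #|[set m | u m i == -1]| in
  if (q < p)%N then 1 else if (p < q)%N then -1 else 0.

(* In each coordinate the values are +-1, so sorting them gives q copies of -1
   followed by p copies of 1.  The mean and the majority vote both have the
   sign of p - q.  Removing k entries from each end of this sorted list keeps
   the larger block strictly larger (2k < p + q), so every trimmed mean also
   has the sign of p - q; the median is the trimmed mean with k = (n - 1)/2. *)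

From HB Require Import structures.
From mathcomp Require Import all_boot all_order all_algebra zify lra.
Set Implicit Arguments.
Unset Strict Implicit.
Unset Printing Implicit Defensive.

Import Order.TTheory GRing.Theory Num.Theory.
Local Open Scope ring_scope.

Section PlusMinusSeq.

Variable R : realDomainType.

Definition pm_seq (q p : nat) : seq R := nseq q (-1) ++ nseq p 1.

Lemma perm_pm_seq (s : seq R) :
  all (mem [:: 1; -1]) s ->
  perm_eq s (pm_seq (count_mem (-1) s) (count_mem 1 s)).
Proof.
have N1_neq1 : (-1 : R) != 1 by rewrite lt_eqF //; lra.
elim: s => //= x s IHs /andP[]; rewrite !inE => /orP[] /eqP-> {}/IHs.
  rewrite eqxx eq_sym (negbTE N1_neq1) /pm_seq /= => perm_s.
  by rewrite perm_sym -cat1s perm_catCA perm_cons perm_sym.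
by rewrite eqxx (negbTE N1_neq1) /= perm_cons.
Qed.

Lemma sorted_pm_seq q p : sorted <=%R (pm_seq q p).
Proof.
rewrite le_sorted_pairwise pairwise_cat; apply/and3P; split.
- by apply/allrelP => x y /nseqP[-> _] /nseqP[-> _]; lra.
- by elim: q => //= q ->; rewrite all_nseq lexx orbT.
- by elim: p => //= p ->; rewrite all_nseq lexx orbT.
Qed.

Lemma sort_pm_seq (s : seq R) :
  all (mem [:: 1; -1]) s ->
  sort <=%R s = pm_seq (count_mem (-1) s) (count_mem 1 s).
Proof.
move=> s_pm; apply: (sorted_eq le_trans le_anti).
- by apply: sort_sorted => a b; exact: le_total.
- exact: sorted_pm_seq.
by rewrite perm_sort perm_pm_seq.
Qed.

Lemma sum_pm_seq q p : \sum_(x <- pm_seq q p) x = p%:R - q%:R.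
Proof. by rewrite big_cat !big_nseq !iter_addr_0 mulNrn addrC. Qed.

Lemma sgr_subn (p q : nat) :
  Num.sg (p%:R - q%:R : R) = if (q < p)%N then 1 else if (p < q)%N then -1 else 0.
Proof.
case: ltngtP => [q_lt_p | p_lt_q | ->]; last by rewrite subrr sgr0.
- by apply/gtr0_sg; rewrite subr_gt0 ltr_nat.
- by apply/ltr0_sg; rewrite subr_lt0 ltr_nat.
Qed.

End PlusMinusSeq.

Section NseqCat.

Variables (T : Type) (x y : T).

Lemma drop_nseq_cat q k s :
  drop k (nseq q x ++ s) = nseq (q - k) x ++ drop (k - q) s.
Proof. by elim: q k => [|q IHq] [|k] //=; rewrite ?subn0 ?drop0. Qed.

Lemma take_nseq_cat q n s :
  take n (nseq q x ++ s) = nseq (minn n q) x ++ take (n - q) s.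
Proof. by elim: q n => [|q IHq] [|n] //=; rewrite ?min0n ?minnSS ?subn0 ?take0 ?IHq. Qed.

(* If one block is shorter than k, the truncated subtractions remove the
   excess of the trim from the other block. *)
Lemma trim_nseq_cat q p k : (2 * k <= q + p)%N ->
  take (q + p - 2 * k) (drop k (nseq q x ++ nseq p y)) =
  nseq (q - k - (k - p)) x ++ nseq (p - k - (k - q)) y.
Proof.
move=> k2_le; rewrite drop_nseq_cat drop_nseq take_nseq_cat take_nseq; last by lia.
by congr (nseq _ _ ++ nseq _ _); lia.
Qed.

End NseqCat.

Lemma sgr_subn_trim (R : realDomainType) q p k : (2 * k < q + p)%N ->
  Num.sg ((p - k - (k - q))%:R - (q - k - (k - p))%:R : R) = Num.sg (p%:R - q%:R).
Proof. by move=> k2_lt; rewrite !sgr_subn; do !case: ltnP => ? //; lia. Qed.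

Section Mean.

Variable F : fieldType.

Definition mean (s : seq F) : F := (size s)%:R^-1 * \sum_(x <- s) x.

Lemma perm_mean (s t : seq F) : perm_eq s t -> mean s = mean t.
Proof. by move=> st; rewrite /mean (perm_size st) (perm_big _ st). Qed.

Lemma mean_middle (s : seq F) (n := size s) (k := n.-1./2) : (0 < n)%N ->
  mean (take (n - 2 * k) (drop k s)) =
  if ~~ odd n then (nth 0 s (n %/ 2).-1 + nth 0 s (n %/ 2)) / 2
  else nth 0 s (uphalf n).-1.
Proof.
move=> n_gt0; have k_def : k = (n.-1 %/ 2)%N by rewrite divn2.
have n_mod2 := modn2 n; rewrite uphalfE -!divn2.
have mean1 a : mean [:: a] = a by rewrite /mean big_seq1 invr1 mul1r.
have mean2 a b : mean [:: a; b] = (a + b) / 2.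
  by rewrite /mean !big_cons big_nil addr0 mulrC.
case: (odd n) n_mod2 => /= n_mod2.
- have -> : (n - 2 * k = 1)%N by lia.
  rewrite (drop_nth 0) /=; last by lia.
  by rewrite take0 mean1; congr (nth 0 s _); lia.
- have -> : (n - 2 * k = 2)%N by lia.
  rewrite (drop_nth 0) ?(drop_nth 0 (n := k.+1)) /=; try lia.
  by rewrite take0 mean2; congr ((nth 0 s _ + nth 0 s _) / 2); lia.
Qed.

End Mean.

Section PlusMinusMean.

Variable R : realFieldType.

Lemma sgr_mean_pm_seq q p : Num.sg (mean (pm_seq R q p)) = Num.sg (p%:R - q%:R).
Proof.
rewrite /mean sum_pm_seq size_cat !size_nseq.
have [/eqP | qp_gt0] := posnP (q + p).
  by rewrite addn_eq0 => /andP[/eqP-> /eqP->]; rewrite subrr mulr0.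
by rewrite sgrM sgrV gtr0_sg ?mul1r // ltr0n.
Qed.

Lemma sgr_mean_trim_pm_seq q p k : (2 * k < q + p)%N ->
  Num.sg (mean (take (q + p - 2 * k) (drop k (pm_seq R q p)))) = Num.sg (p%:R - q%:R).
Proof.
move=> k2_lt; rewrite trim_nseq_cat; last exact: ltnW.
by rewrite sgr_mean_pm_seq sgr_subn_trim.
Qed.

End PlusMinusMean.

Section Aggregators.

Variables (R : realFieldType) (S : finType) (d : nat) (u : S -> 'I_d -> R) (i : 'I_d).

Lemma size_coord_vals : size (coord_vals u i) = #|S|.
Proof. by rewrite size_map -cardT. Qed.

Lemma agg_avg_mean : agg_avg u i = mean (coord_vals u i).
Proof. by rewrite /agg_avg /mean size_coord_vals big_map big_enum. Qed.

Lemma agg_trimmed_mean k : (2 * k < #|S|)%N ->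
  agg_trimmed k u i = mean (take (#|S| - 2 * k) (drop k (sorted_vals u i))).
Proof.
move=> k2_lt; set r := take _ _.
have size_r : size r = (#|S| - 2 * k)%N.
  rewrite size_takel // size_drop size_sort size_coord_vals.
  by rewrite leq_sub2l // mul2n -addnn leq_addr.
rewrite /agg_trimmed /= -/r /mean size_r ifF //.
by rewrite subn_eq0 leqNgt k2_lt.
Qed.

Lemma agg_median_trimmed : (0 < #|S|)%N ->
  agg_median u i = agg_trimmed #|S|.-1./2 u i.
Proof.
move=> S_gt0; rewrite agg_trimmed_mean; last by rewrite -divn2; lia.
by rewrite -size_coord_vals -(size_sort <=%R) mean_middle ?size_sort ?size_coord_vals.
Qed.

Lemma card_coord_eq a : #|[set m | u m i == a]| = count_mem a (coord_vals u i).
Proof.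
rewrite cardsE cardE count_map -size_filter /enum_mem -filter_predI.
by congr size; apply: eq_filter => m; rewrite !inE andbT.
Qed.

Lemma agg_maj_sgr : agg_maj u i =
  Num.sg ((count_mem 1 (coord_vals u i))%:R - (count_mem (-1) (coord_vals u i))%:R).
Proof. by rewrite sgr_subn /agg_maj !card_coord_eq. Qed.

Hypothesis u_pm : forall m, u m i = 1 \/ u m i = -1.

Lemma coord_vals_pm : all (mem [:: 1; -1]) (coord_vals u i).
Proof.
by apply/allP => _ /mapP[m _ ->]; case: (u_pm m) => ->; rewrite !inE eqxx ?orbT.
Qed.

Lemma sorted_vals_pm : sorted_vals u i =
  pm_seq R (count_mem (-1) (coord_vals u i)) (count_mem 1 (coord_vals u i)).
Proof. exact/sort_pm_seq/coord_vals_pm. Qed.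

End Aggregators.

Theorem theorem1 (R : realFieldType) (d : nat) (S : finType)
  (u : S -> 'I_d -> R) :
  (0 < d)%N -> (0 < #|S|)%N ->
  (forall m i, u m i = 1 \/ u m i = -1) ->
  forall i : 'I_d,
    Num.sg (agg_median u i) = Num.sg (agg_avg u i) /\
    Num.sg (agg_maj u i) = Num.sg (agg_avg u i) /\
    (forall k : nat, (2 * k < #|S|)%N ->
       Num.sg (agg_trimmed k u i) = Num.sg (agg_avg u i)).
Proof.
move=> _ S_gt0 u_pm i; have u_pm_i m := u_pm m i.
set q := count_mem (-1) (coord_vals u i); set p := count_mem 1 (coord_vals u i).
have perm_qp : perm_eq (coord_vals u i) (pm_seq R q p).
  exact: perm_pm_seq (coord_vals_pm u_pm_i).
have size_qp : (q + p)%N = #|S|.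
  by rewrite -(size_coord_vals u i) (perm_size perm_qp) size_cat !size_nseq.
have sg_avg : Num.sg (agg_avg u i) = Num.sg (p%:R - q%:R).
  by rewrite agg_avg_mean (perm_mean perm_qp) sgr_mean_pm_seq.
have sg_trimmed k : (2 * k < #|S|)%N -> Num.sg (agg_trimmed k u i) = Num.sg (agg_avg u i).
  move=> k2_lt; rewrite agg_trimmed_mean // (sorted_vals_pm u_pm_i) -size_qp.
  by rewrite sgr_mean_trim_pm_seq ?size_qp.
split; last split.
- by rewrite agg_median_trimmed // sg_trimmed // -divn2; lia.
- by rewrite agg_maj_sgr sgr_id sg_avg.
- exact: sg_trimmed.
Qed.
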